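(* Let $\Bbbk$ be a field of characteristic $0$, $n\ge3$, and let $(A,\mu,(\alpha_1,\ldots,\alpha_{n-1}))$ be an $n$-ary totally Hom-associative algebra over $\Bbbk$, with $\mu(x_1,\ldots,x_n)=(x_1\cdots x_n)$. Suppose there exist $a_1,\ldots,a_k\in A$ for some $k\le n-2$ such that (1) $\alpha_{n-i}(a_i)=a_i$ for all $i\in\{1,\ldots,k\}$, and (2) $(x_1,\ldots,x_{n-i},a_i,a_{i-1},\ldots,a_1)=(x_1,\ldots,x_{n-i-1},a_i,x_{n-i},a_{i-1},\ldots,a_1)$ for all $i\in\{1,\ldots,k\}$ and all $x_j\in A$. Define the $(n-k)$-ary product $(x_1,\ldots,x_{n-k})^k=(x_1,\ldots,x_{n-k},a_k,a_{k-1},\ldots,a_1)$. Then $A_k=(A,(\cdot)^k,(\alpha_1,\ldots,\alpha_{n-1-k}))$ is an $(n-k)$-ary totally Hom-associative algebra. Moreover, if $A$ is multiplicative, then so is $A_k$.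
   Context: An $m$-ary Hom-algebra $(V,\mu,(\alpha_1,\ldots,\alpha_{m-1}))$ is a vector space $V$ with an $m$-linear map $\mu$ (written $\mu(a_1,\ldots,a_m)=(a_1\cdots a_m)$) and linear maps $\alpha_i\colon V\to V$. It is multiplicative if all $\alpha_i$ equal one map $\alpha$ and $\alpha\circ\mu=\mu\circ\alpha^{\otimes m}$. It is $m$-ary totally Hom-associative if for every $i\in\{1,\ldots,m-1\}$ and all $a_1,\ldots,a_{2m-1}$: $(\alpha_1(a_1),\ldots,\alpha_{i-1}(a_{i-1}),(a_i\cdots a_{i+m-1}),\alpha_i(a_{i+m}),\ldots,\alpha_{m-1}(a_{2m-1}))=(\alpha_1(a_1),\ldots,\alpha_i(a_i),(a_{i+1}\cdots a_{i+m}),\alpha_{i+1}(a_{i+m+1}),\ldots,\alpha_{m-1}(a_{2m-1}))$. *)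

From HB Require Import structures.
From mathcomp Require Import all_boot all_order all_algebra.
Set Implicit Arguments. Unset Strict Implicit. Unset Printing Implicit Defensive.
Import GRing.Theory.
Local Open Scope ring_scope.

(* The twisting maps
   alpha_1, ..., alpha_{m-1} are encoded as alpha : nat -> V -> V, of which
   only the values at indices 1 .. m-1 are used.  Positions in tuples are
   0-based in Rocq (position j <-> paper position j+1). *)

Section HomAlg.
Variables (K : fieldType) (V : lmodType K).

Definition is_linear_map (f : V -> V) : Prop :=
  forall (c : K) (u v : V), f (c *: u + v) = c *: f u + f v.

Definition multilinear (m : nat) (mu : m.-tuple V -> V) : Prop :=
  forall (x : 'I_m -> V) (i : 'I_m) (c : K) (u v : V),
    mu [tuple (if j == i then c *: u + v else x j) | j < m]
    = c *: mu [tuple (if j == i then u else x j) | j < m]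
      + mu [tuple (if j == i then v else x j) | j < m].

Definition hom_algebra (m : nat) (mu : m.-tuple V -> V) (alpha : nat -> V -> V)
  : Prop :=
  multilinear mu /\ (forall j, (1 <= j <= m.-1)%N -> is_linear_map (alpha j)).

(* The argument tuple
   (alpha_1(a_1),...,alpha_{i-1}(a_{i-1}), (a_i ... a_{i+m-1}),
    alpha_i(a_{i+m}),...,alpha_{m-1}(a_{2m-1})),
   i.e. paper position p (= j+1) holds alpha_p(a_p) if p < i, the inner
   product if p = i, and alpha_{p-1}(a_{p+m-1}) if p > i. *)
Definition assoc_args (m : nat) (mu : m.-tuple V -> V) (alpha : nat -> V -> V)
  (a : nat -> V) (i : nat) : m.-tuple V :=
  [tuple (if (j.+1 < i)%N then alpha j.+1 (a j.+1)
          else if j.+1 == i then mu [tuple a (i + l)%N | l < m]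
          else alpha (nat_of_ord j) (a (j + m)%N)) | j < m].

(* m-ary total Hom-associativity: for every i in {1,...,m-1} the i-th and
   (i+1)-th bracketings agree (the right-hand side of the paper's identity
   is exactly assoc_args ... (i+1)). *)
Definition total_hom_assoc (m : nat) (mu : m.-tuple V -> V)
  (alpha : nat -> V -> V) : Prop :=
  forall (i : nat) (a : nat -> V), (1 <= i <= m.-1)%N ->
    mu (assoc_args mu alpha a i) = mu (assoc_args mu alpha a i.+1).

Definition total_hom_assoc_algebra (m : nat) (mu : m.-tuple V -> V)
  (alpha : nat -> V -> V) : Prop :=
  hom_algebra mu alpha /\ total_hom_assoc mu alpha.

Definition hom_multiplicative (m : nat) (mu : m.-tuple V -> V)
  (alpha : nat -> V -> V) : Prop :=
  exists f : V -> V,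
    (forall j, (1 <= j <= m.-1)%N -> alpha j = f) /\
    (forall x : m.-tuple V, f (mu x) = mu (map_tuple f x)).

(* The induced (n-k)-ary product
   (x_1,...,x_{n-k})^k = (x_1,...,x_{n-k}, a_k, a_{k-1}, ..., a_1):
   paper position p > n-k holds a_{n-p+1}. *)
Definition induced_op {n : nat} (k : nat) (mu : n.-tuple V -> V) (a : nat -> V)
  (x : (n - k).-tuple V) : V :=
  mu [tuple (if (j < n - k)%N then nth 0 x j else a (n - j)%N) | j < n].

End HomAlg.
Arguments induced_op {K V n} k mu a x.

From HB Require Import structures.
From mathcomp Require Import all_boot all_order all_algebra.
From mathcomp Require Import zify.
Import GRing.Theory.
Local Open Scope ring_scope.

(* The fixed tail a_k, ..., a_1 may be commuted past any single argument: by
   hypothesis (2) for i = 1, ..., k, an argument z placed after the tail moves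
   in front of a_1, then of a_2, ..., until it sits in front of a_k.  An
   i-th bracketing for the induced product is an i-th bracketing for mu of a
   padded argument list (hypothesis (1) absorbs the twists on the outer tail);
   in the (i+1)-th bracketing the inner tail comes out in front of the last
   inner argument, and commuting it back turns total Hom-associativity of mu
   into that of the induced product. *)

Lemma nth_mktuple_lt {T : Type} (x0 : T) {m} {F : 'I_m -> T} {j} (lt_jm : (j < m)%N) :
  nth x0 [tuple F l | l < m] j = F (Ordinal lt_jm).
Proof. exact: (nth_mktuple F x0 (Ordinal lt_jm)). Qed.

Lemma map_mktuple (T : Type) m (f : T -> T) (F : 'I_m -> T) :
  map_tuple f [tuple F j | j < m] = [tuple f (F j) | j < m].
Proof. by apply: eq_from_tnth => j; rewrite tnth_map !tnth_mktuple. Qed.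

Ltac congr_lia := first [lia | congr (_ _); congr_lia].
Ltac index_arith := repeat (case: ifP => /= ?); solve [done | congr_lia].

Section InducedOp.
Variables (K : fieldType) (V : lmodType K) (n k : nat) (mu : n.-tuple V -> V).
Variables (alpha : nat -> V -> V) (a : nat -> V).

Local Notation mu_k := (induced_op k mu a).

Lemma mu_eq_induced_op (F : 'I_n -> V) (x : (n - k).-tuple V) :
  (forall j : 'I_n, F j = if (j < n - k)%N then nth 0 x j else a (n - j)%N) ->
  mu [tuple F j | j < n] = mu_k x.
Proof. by move=> eqF; congr mu; apply: eq_mktuple. Qed.

Lemma induced_op_multilinear : multilinear mu -> multilinear mu_k.
Proof.
move=> mu_lin x i c u v.
have lt_in : (i < n)%N by have := ltn_ord i; lia.
pose y (j : 'I_n) := if (j < n - k)%N then nth 0 [tuple x l | l < n - k] j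
                     else a (n - j)%N.
suff mu_kE w : mu_k [tuple (if j == i then w else x j) | j < n - k]
    = mu [tuple (if j == Ordinal lt_in then w else y j) | j < n].
  by rewrite !mu_kE mu_lin.
symmetry; apply: mu_eq_induced_op => j /=; rewrite /y.
case: (ltnP j (n - k)) => [lt_jk|le_kj].
  by rewrite !nth_mktuple_lt -!val_eqE.
rewrite ifN_eq // -val_eqE /= neq_ltn; have := ltn_ord i; lia.
Qed.

Hypothesis alpha_tail : forall i, (1 <= i <= k)%N -> alpha (n - i)%N (a i) = a i.

Lemma alpha_tail_pos j : (n - k <= j < n)%N -> alpha j (a (n - j)%N) = a (n - j)%N.
Proof. by move=> hj; rewrite -{1}(subKn (ltnW (proj2 (andP hj)))) alpha_tail //; lia. Qed.

Lemma induced_op_multiplicative :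
  (k < n)%N -> hom_multiplicative mu alpha -> hom_multiplicative mu_k alpha.
Proof.
move=> lt_kn [f [alpha_f f_mu]]; exists f; split=> [j hj|x].
  by apply: alpha_f; lia.
rewrite /induced_op f_mu map_mktuple; congr mu; apply: eq_mktuple => j /=.
case: ifP => lt_jk; first by rewrite (nth_map 0) // size_tuple.
have tail_j : (n - k <= j < n)%N by have := ltn_ord j; lia.
by rewrite -(alpha_f j) ?alpha_tail_pos //; lia.
Qed.

Hypothesis le_k_n2 : (k <= n - 2)%N.
Hypothesis tail_swap : forall i, (1 <= i <= k)%N -> forall x : nat -> V,
  mu [tuple (if (j.+1 <= n - i)%N then x j.+1 else a (n - j)%N) | j < n]
  = mu [tuple (if (j.+1 < n - i)%N then x j.+1
               else if j.+1 == (n - i)%N then a i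
               else if j.+1 == (n - i).+1 then x (n - i)%N
               else a (n - j)%N) | j < n].

(* The argument list (y_0, ..., y_{n-k-2}, a_k, ..., a_{t+1}, z, a_t, ..., a_1). *)
Definition insert_in_tail (y : nat -> V) (z : V) (t j : nat) : V :=
  if (j < n - k - 1)%N then y j
  else if (j < n - 1 - t)%N then a (n - 1 - j)%N
  else if j == (n - 1 - t)%N then z else a (n - j)%N.

Lemma mu_insert_in_tailS y z t : (t < k)%N ->
  mu [tuple insert_in_tail y z t j | j < n]
  = mu [tuple insert_in_tail y z t.+1 j | j < n].
Proof.
move=> lt_tk.
have := @tail_swap t.+1 _ (fun p => insert_in_tail y z t.+1 p.-1).
rewrite lt_tk => /(_ isT) swap_t.
symmetry; apply: (etrans (etrans _ swap_t)); congr mu; apply: eq_mktuple => j /=;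
  have lt_jn := ltn_ord j; rewrite /insert_in_tail; index_arith.
Qed.

Lemma mu_insert_in_tail y z :
  mu [tuple insert_in_tail y z 0 j | j < n]
  = mu [tuple insert_in_tail y z k j | j < n].
Proof.
suff mu_t t : (t <= k)%N -> mu [tuple insert_in_tail y z 0 j | j < n]
                          = mu [tuple insert_in_tail y z t j | j < n].
  exact: mu_t.
elim: t => [//|t IHt] le_tk.
by rewrite IHt; [apply: mu_insert_in_tailS|]; lia.
Qed.

(* For 1-based b, the n-ary argument list
   (b_1, ..., b_{i+n-k-1}, a_k, ..., a_1, b_{i+n-k}, ..., b_{2(n-k)-1}, a_k, ..., a_1). *)
Definition pad_args (i : nat) (b : nat -> V) (p : nat) : V :=
  if (p < i + (n - k))%N then b p
  else if (p < i + n)%N then a (i + n - p)%N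
  else if (p < (n - k) + n)%N then b (p + (n - k) - n)%N
  else a (2 * n - p)%N.

Lemma alpha_pad_args_tail i b j : (i <= n - k)%N -> (n - k <= j < n)%N ->
  alpha j (pad_args i b (j + n)) = a (n - j)%N.
Proof.
move=> le_ik tail_j; rewrite /pad_args !ifF; try lia.
by rewrite (_ : 2 * n - (j + n) = n - j)%N ?alpha_tail_pos //; lia.
Qed.

Lemma induced_assoc_argsE i b : (1 <= i <= n - k)%N ->
  mu_k (assoc_args mu_k alpha b i) = mu (assoc_args mu alpha (pad_args i b) i).
Proof.
move=> hi; symmetry; apply: mu_eq_induced_op => j /=.
have lt_jn := ltn_ord j.
case: (ltnP j (n - k)) => [lt_jk|le_kj]; last first.
  by rewrite !ifF ?alpha_pad_args_tail //; lia.
rewrite (nth_mktuple_lt _ lt_jk) /=.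
case: ifP => [lt_j1i|ge_j1i]; first by rewrite /pad_args ifT //; lia.
case: ifP => [eq_j1i|ne_j1i]; last by rewrite /pad_args; index_arith.
apply: mu_eq_induced_op => l /=; have lt_ln := ltn_ord l.
case: (ltnP l (n - k)) => [lt_lk|le_kl]; first rewrite (nth_mktuple_lt _ lt_lk) /=;
  rewrite /pad_args; index_arith.
Qed.

Lemma mu_pad_argsS i b : (1 <= i < n - k)%N ->
  mu (assoc_args mu alpha (pad_args i b) i.+1)
  = mu (assoc_args mu alpha (pad_args i.+1 b) i.+1).
Proof.
move=> hi.
have inner : mu [tuple pad_args i b (i.+1 + l) | l < n]
           = mu [tuple pad_args i.+1 b (i.+1 + l) | l < n].
  pose y l := b (i.+1 + l)%N; pose z := b (i + (n - k))%N.
  transitivity (mu [tuple insert_in_tail y z 0 l | l < n]).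
    congr mu; apply: eq_mktuple => l /=; have lt_ln := ltn_ord l.
    by rewrite /pad_args /insert_in_tail /y /z; index_arith.
  rewrite mu_insert_in_tail; congr mu; apply: eq_mktuple => l /=.
  have lt_ln := ltn_ord l.
  by rewrite /pad_args /insert_in_tail /y /z; index_arith.
congr mu; apply: eq_mktuple => j /=; have lt_jn := ltn_ord j.
case: ifP => [lt_ji|ge_ji]; first by rewrite /pad_args; index_arith.
case: ifP => [_|ne_ji]; first exact: inner.
by rewrite /pad_args; index_arith.
Qed.

Lemma induced_op_total_hom_assoc :
  total_hom_assoc mu alpha -> total_hom_assoc mu_k alpha.
Proof.
move=> mu_assoc i b hi.
rewrite induced_assoc_argsE; last lia.
rewrite mu_assoc; last lia.
rewrite mu_pad_argsS; last lia.
by rewrite induced_assoc_argsE; last lia.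
Qed.

End InducedOp.

Theorem corollary3p5 (K : fieldType) (V : lmodType K)
  (n k : nat) (mu : n.-tuple V -> V) (alpha : nat -> V -> V) (a : nat -> V) :
  [pchar K] =i pred0 ->
  (3 <= n)%N ->
  total_hom_assoc_algebra mu alpha ->
  (k <= n - 2)%N ->
  (forall i, (1 <= i <= k)%N -> alpha (n - i)%N (a i) = a i) ->
  (forall i, (1 <= i <= k)%N -> forall x : nat -> V,
     mu [tuple (if (j.+1 <= n - i)%N then x j.+1 else a (n - j)%N) | j < n]
     = mu [tuple (if (j.+1 < n - i)%N then x j.+1
                  else if j.+1 == (n - i)%N then a i
                  else if j.+1 == (n - i).+1 then x (n - i)%N
                  else a (n - j)%N) | j < n]) ->
  total_hom_assoc_algebra (induced_op k mu a) alpha /\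
  (hom_multiplicative mu alpha -> hom_multiplicative (induced_op k mu a) alpha).
Proof.
move=> _ le3n [[mu_lin alpha_lin] mu_assoc] le_k_n2 alpha_tail tail_swap.
have lt_kn : (k < n)%N by lia.
split; last exact: induced_op_multiplicative.
split; last exact: induced_op_total_hom_assoc.
split; first exact: induced_op_multilinear.
by move=> j hj; apply: alpha_lin; lia.
Qed.
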